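(* Let $F(y) = \frac{1}{\sqrt{\pi}} \int_{-y}^{y} e^{-x^2}\,dx$ for $y \ge 0$. Then, as $n \to \infty$, \[ \int_0^\infty (1 - F(y))^n \, dy = \frac{\sqrt{\pi}}{2(n+1)} + o(n^{-2}). \]
   Context: $F$ is the distribution function of $|Z|$ where $Z$ is a centered normal random variable with variance $1/2$. *)

From Stdlib Require Import Reals.
From Coquelicot Require Import Coquelicot.
Open Scope R_scope.

(* F(y) = (1/sqrt pi) * int_{-y}^{y} exp(-x^2) dx  (distribution function of |Z|,
   Z ~ N(0,1/2)); only used for y >= 0. *)
Definition F (y : R) : R :=
  / sqrt PI * RInt (fun x => exp (- (x ^ 2))) (- y) y.

From Stdlib Require Import Reals Lra Lia Classical.
From Coquelicot Require Import Coquelicot.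
Open Scope R_scope.

(* Write G = 1 - F, so that G' = -(2/sqrt pi) e^{-y^2}, and split
   G^n = G^n e^{-y^2} + G^n (1 - e^{-y^2}).  The first part has the primitive
   -(sqrt pi/2) G^{n+1}/(n+1) and integrates to sqrt pi/(2(n+1)) because G(0) = 1 and
   G(+oo) = 0.  In the second, 1 - e^{-y^2} <= y^2 and G(y) <= e^{-y/2}, so it is at most
   int_0^oo e^{-ny/2} y^2 dy = 16/n^3 = o(n^{-2}).
   G(+oo) = 0 is the Gaussian integral, obtained by Feynman's trick: with
   A(x) = int_0^1 e^{-x^2(1+t^2)}/(1+t^2) dt, the function (int_0^x e^{-t^2} dt)^2 + A(x)
   has zero derivative and equals pi/4 at 0, while 0 <= A(x) <= e^{-x^2}. *)

Lemma continuous_of_ex_derive (f : R -> R) x : ex_derive f x -> continuous f x.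
Proof. exact (@ex_derive_continuous R_AbsRing R_NormedModule f x). Qed.

Lemma ex_RInt_of_continuous (f : R -> R) a b : (forall x, continuous f x) -> ex_RInt f a b.
Proof. intros Hf. apply (@ex_RInt_continuous R_CompleteNormedModule). intros; apply Hf. Qed.

Lemma RInt_of_is_derive (f df : R -> R) a b :
  (forall x, is_derive f x (df x)) -> (forall x, continuous df x) -> RInt df a b = f b - f a.
Proof.
  intros Hd Hc. apply is_RInt_unique.
  apply (@is_RInt_derive R_CompleteNormedModule); intros; auto.
Qed.

Lemma is_derive_zero_const (f : R -> R) : (forall x, is_derive f x 0) -> forall x y, f x = f y.
Proof.
  intros Hd x y. destruct (MVT_gen f y x (fun _ => 0)) as [c [_ Hc]].
  - intros; apply Hd.
  - intros z _. apply continuity_pt_filterlim, continuous_of_ex_derive. eexists; apply Hd.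
  - lra.
Qed.

Lemma exp_le_compat x y : x <= y -> exp x <= exp y.
Proof. intros [Hlt | ->]; [apply Rlt_le, exp_increasing, Hlt | apply Rle_refl]. Qed.

Lemma exp_pow x n : exp x ^ n = exp (INR n * x).
Proof.
  induction n as [|n IH].
  - simpl. rewrite Rmult_0_l, exp_0. reflexivity.
  - rewrite <- tech_pow_Rmult, IH, <- exp_plus, S_INR. f_equal. ring.
Qed.

Lemma is_lim_p_infty_of_incr_bounded (f : R -> R) a B :
  (forall x y, a <= x <= y -> f x <= f y) -> (forall x, a <= x -> f x <= B) ->
  exists L, f a <= L <= B /\ is_lim f p_infty L.
Proof.
  intros Hincr Hbnd.
  destruct (completeness (fun v => exists x, a <= x /\ v = f x)) as [L [HubL HlubL]].
  - exists B. intros v [x [Hx ->]]. auto.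
  - exists (f a), a. split; auto; lra.
  - exists L. split; [split|].
    + apply HubL. exists a. split; auto; lra.
    + apply HlubL. intros v [x [Hx ->]]. auto.
    + intros P [eps HP].
      assert (Hnear : exists x, a <= x /\ L - eps < f x).
      { apply NNPP. intros Hnone.
        assert (L <= L - eps); [|generalize (cond_pos eps); lra].
        apply HlubL. intros v [x [Hx ->]].
        apply Rnot_lt_le. intros Hlt. apply Hnone. exists x. auto. }
      destruct Hnear as [x [Hx Hfx]].
      exists x. intros y Hy. apply HP.
      assert (f y <= L) by (apply HubL; exists y; split; auto; lra).
      assert (f x <= f y) by (apply Hincr; lra).
      change (Rabs (f y - L) < eps). apply Rabs_def1; lra.
Qed.

Lemma is_RInt_gen_of_is_lim (f : R -> R) a (l : R) :
  (forall u v, ex_RInt f u v) -> is_lim (fun b => RInt f a b) p_infty l ->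
  is_RInt_gen f (at_point a) (Rbar_locally p_infty) l.
Proof.
  intros Hex Hlim.
  apply (filterlimi_lim_ext (fun ab => RInt f (fst ab) (snd ab))).
  - intros [u v]. apply (@RInt_correct R_CompleteNormedModule), Hex.
  - intros P HP. destruct (Hlim P HP) as [M HM].
    apply (Filter_prod _ _ _ (fun x => x = a) (fun y => M < y)).
    + reflexivity.
    + exists M. auto.
    + intros x y -> Hy. apply HM, Hy.
Qed.

Lemma is_RInt_gen_of_nonneg_bounded (f : R -> R) a B :
  (forall x, continuous f x) -> (forall x, a <= x -> 0 <= f x) ->
  (forall b, a <= b -> RInt f a b <= B) ->
  exists L, 0 <= L <= B /\ is_RInt_gen f (at_point a) (Rbar_locally p_infty) L.
Proof.
  intros Hc Hpos Hbnd.
  assert (Hex : forall u v, ex_RInt f u v) by (intros; apply ex_RInt_of_continuous, Hc).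
  destruct (is_lim_p_infty_of_incr_bounded (fun b => RInt f a b) a B) as [L [HL Hlim]];
    auto.
  - intros x y Hxy.
    rewrite <- (@RInt_Chasles R_CompleteNormedModule f a x y) by auto.
    assert (0 <= RInt f x y) by (apply RInt_ge_0; [lra | auto | intros; apply Hpos; lra]).
    change (RInt f a x <= RInt f a x + RInt f x y). lra.
  - rewrite RInt_point in HL.
    exists L. split; [exact HL|]. apply is_RInt_gen_of_is_lim; auto.
Qed.

Lemma RInt_exp_mul_sqr_le m b : 0 < m -> 0 <= b ->
  RInt (fun y => exp (- (m * y)) * y ^ 2) 0 b <= 2 / m ^ 3.
Proof.
  intros Hm Hb.
  set (P := fun y => y ^ 2 / m + 2 * y / m ^ 2 + 2 / m ^ 3).
  assert (HPb : 0 <= exp (- (m * b)) * P b).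
  { apply Rmult_le_pos; [apply Rlt_le, exp_pos|]. unfold P.
    assert (0 < m ^ 2) by (apply pow_lt; lra). assert (0 < m ^ 3) by (apply pow_lt; lra).
    repeat apply Rplus_le_le_0_compat; apply Rdiv_le_0_compat; nra. }
  assert (HP0 : P 0 = 2 / m ^ 3) by (unfold P; field; lra).
  rewrite (RInt_of_is_derive (fun y => - exp (- (m * y)) * P y)).
  - rewrite HP0, Rmult_0_r, Ropp_0, exp_0. lra.
  - intros y. unfold P. auto_derive; auto. field. lra.
  - intros y. apply continuous_of_ex_derive. auto_derive. auto.
Qed.

Definition gauss (x : R) : R := exp (- x ^ 2).

Lemma continuous_gauss x : continuous gauss x.
Proof. apply continuous_of_ex_derive. unfold gauss. auto_derive. auto. Qed.

Lemma continuous_gauss_scale u t : continuous (fun t => gauss (u * t)) t.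
Proof. apply continuous_of_ex_derive. unfold gauss. auto_derive. auto. Qed.

Lemma gauss_le1 x : gauss x <= 1.
Proof. unfold gauss. rewrite <- exp_0. apply exp_le_compat. nra. Qed.

Lemma one_sub_gauss_le_sqr x : 1 - gauss x <= x ^ 2.
Proof. unfold gauss. generalize (exp_ineq1_le (- x ^ 2)). lra. Qed.

Definition gauss_int (y : R) : R := RInt gauss 0 y.

Lemma ex_RInt_gauss a b : ex_RInt gauss a b.
Proof. apply ex_RInt_of_continuous, continuous_gauss. Qed.

Lemma is_derive_gauss_int y : is_derive gauss_int y (gauss y).
Proof.
  apply is_derive_RInt with (a := 0).
  - apply filter_forall. intros b. apply (@RInt_correct R_CompleteNormedModule), ex_RInt_gauss.
  - apply continuous_gauss.
Qed.

Lemma ex_derive_gauss_int y : ex_derive gauss_int y.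
Proof. eexists. apply is_derive_gauss_int. Qed.

Lemma Derive_gauss_int y : Derive gauss_int y = gauss y.
Proof. apply is_derive_unique, is_derive_gauss_int. Qed.

Lemma gauss_int_0 : gauss_int 0 = 0.
Proof. unfold gauss_int. rewrite RInt_point. reflexivity. Qed.

Lemma gauss_int_ge0 y : 0 <= y -> 0 <= gauss_int y.
Proof.
  intros Hy. apply RInt_ge_0; [exact Hy | apply ex_RInt_gauss |].
  intros; apply Rlt_le, exp_pos.
Qed.

Lemma gauss_int_opp y : gauss_int (- y) = - gauss_int y.
Proof.
  assert (Hodd : gauss_int (- y) + gauss_int y = gauss_int (- 0) + gauss_int 0).
  { apply (is_derive_zero_const (fun z => gauss_int (- z) + gauss_int z)). intros z.
    auto_derive; [repeat split; apply ex_derive_gauss_int |].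
    rewrite !Derive_gauss_int. unfold gauss. replace ((- z) ^ 2) with (z ^ 2) by ring. ring. }
  rewrite Ropp_0, gauss_int_0 in Hodd. lra.
Qed.

Lemma gauss_int_scale x : gauss_int x = x * RInt (fun t => gauss (x * t)) 0 1.
Proof.
  unfold gauss_int.
  assert (Hlin := RInt_comp_lin gauss x 0 0 1).
  rewrite Rmult_0_r, Rmult_1_r, !Rplus_0_r in Hlin.
  rewrite <- Hlin by apply ex_RInt_gauss.
  rewrite <- (@RInt_scal R_CompleteNormedModule)
    by apply ex_RInt_of_continuous, continuous_gauss_scale.
  apply RInt_ext. intros t _. rewrite Rplus_0_r. reflexivity.
Qed.

Definition feynman_integrand (x t : R) : R := gauss x * gauss (x * t) / (1 + t ^ 2).

Definition feynman (x : R) : R := RInt (feynman_integrand x) 0 1.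

Lemma continuous_feynman_integrand x t : continuous (feynman_integrand x) t.
Proof. apply continuous_of_ex_derive. unfold feynman_integrand, gauss. auto_derive. nra. Qed.

Lemma is_derive_feynman_integrand x t :
  is_derive (fun z => feynman_integrand z t) x (-2 * x * gauss x * gauss (x * t)).
Proof.
  unfold feynman_integrand, gauss. auto_derive; [nra|].
  replace (x * (x * 1)) with (x ^ 2) by ring.
  replace (x * t * (x * t * 1)) with ((x * t) ^ 2) by ring.
  field. nra.
Qed.

Lemma continuity_2d_feynman_derivative x t :
  continuity_2d_pt (fun u v => -2 * u * gauss u * gauss (u * v)) x t.
Proof.
  apply continuity_2d_pt_filterlim.
  assert (Hfst : continuous (fun z : R * R => fst z) (x, t)) by apply continuous_fst.
  assert (Hsnd : continuous (fun z : R * R => snd z) (x, t)) by apply continuous_snd.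
  apply (@continuous_mult _ R_AbsRing (fun z : R * R => -2 * fst z * gauss (fst z))
           (fun z => gauss (fst z * snd z))).
  - apply (@continuous_mult _ R_AbsRing (fun z : R * R => -2 * fst z) (fun z => gauss (fst z))).
    + apply (@continuous_mult _ R_AbsRing (fun _ => -2) (fun z : R * R => fst z));
        [apply continuous_const | exact Hfst].
    + apply (continuous_comp (fun z : R * R => fst z) gauss); [exact Hfst | apply continuous_gauss].
  - apply (continuous_comp (fun z : R * R => fst z * snd z) gauss).
    + apply (@continuous_mult _ R_AbsRing (fun z : R * R => fst z) (fun z : R * R => snd z));
        assumption.
    + apply continuous_gauss.
Qed.

Lemma is_derive_feynman x : is_derive feynman x (-2 * gauss x * gauss_int x).
Proof.
  replace (-2 * gauss x * gauss_int x)
    with (RInt (fun t => Derive (fun u => feynman_integrand u t) x) 0 1).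
  - apply (is_derive_RInt_param feynman_integrand 0 1 x).
    + apply filter_forall. intros u t _. eexists. apply is_derive_feynman_integrand.
    + intros t _.
      apply (continuity_2d_pt_ext (fun u v => -2 * u * gauss u * gauss (u * v))).
      * intros u v. symmetry. apply is_derive_unique, is_derive_feynman_integrand.
      * apply continuity_2d_feynman_derivative.
    + apply filter_forall. intros u. apply ex_RInt_of_continuous, continuous_feynman_integrand.
  - rewrite gauss_int_scale.
    rewrite (RInt_ext _ (fun t => scal (-2 * x * gauss x) (gauss (x * t)))).
    + rewrite (@RInt_scal R_CompleteNormedModule)
        by apply ex_RInt_of_continuous, continuous_gauss_scale.
      unfold scal; cbn; unfold mult; cbn. ring.
    + intros t _. apply is_derive_unique, is_derive_feynman_integrand.
Qed.

Lemma Derive_feynman x : Derive feynman x = -2 * gauss x * gauss_int x.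
Proof. apply is_derive_unique, is_derive_feynman. Qed.

Lemma feynman_0 : feynman 0 = PI / 4.
Proof.
  unfold feynman. rewrite <- atan_1.
  replace (atan 1) with (atan 1 - atan 0) by (rewrite atan_0; ring).
  rewrite (RInt_ext _ (fun t => / (1 + t ^ 2))).
  - apply (RInt_of_is_derive atan).
    + intros t. apply is_derive_Reals, derivable_pt_lim_atan.
    + intros t. apply continuous_of_ex_derive. auto_derive. nra.
  - intros t _. unfold feynman_integrand, gauss.
    rewrite Rmult_0_l, !pow_i, Ropp_0, exp_0 by lia.
    change (1 * 1 / (1 + t ^ 2) = / (1 + t ^ 2)). field. nra.
Qed.

Lemma feynman_bounds x : 0 <= feynman x <= gauss x.
Proof.
  assert (Hex : ex_RInt (feynman_integrand x) 0 1)
    by apply ex_RInt_of_continuous, continuous_feynman_integrand.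
  assert (Hpt : forall t, 0 <= feynman_integrand x t <= gauss x).
  { intros t. unfold feynman_integrand.
    assert (0 < gauss x) by apply exp_pos. assert (0 < gauss (x * t)) by apply exp_pos.
    assert (gauss (x * t) <= 1) by apply gauss_le1.
    assert (1 <= 1 + t ^ 2) by nra.
    split.
    - apply Rdiv_le_0_compat; nra.
    - apply Rle_trans with (gauss x * gauss (x * t)); [|nra].
      unfold Rdiv. rewrite <- (Rmult_1_r (gauss x * gauss (x * t))) at 2.
      apply Rmult_le_compat_l; [nra|]. rewrite <- Rinv_1. apply Rinv_le_contravar; lra. }
  unfold feynman. split.
  - apply RInt_ge_0; [lra | exact Hex | intros; apply Hpt].
  - apply Rle_trans with (RInt (fun _ => gauss x) 0 1).
    + apply RInt_le; [lra | exact Hex | apply ex_RInt_of_continuous, continuous_const |].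
      intros; apply Hpt.
    + rewrite RInt_const. unfold scal; cbn; unfold mult; cbn. lra.
Qed.

Lemma gauss_int_sqr_add_feynman x : gauss_int x ^ 2 + feynman x = PI / 4.
Proof.
  rewrite <- feynman_0, <- (Rplus_0_l (feynman 0)).
  replace 0 with (gauss_int 0 ^ 2) at 1 by (rewrite gauss_int_0; ring).
  apply (is_derive_zero_const (fun x => gauss_int x ^ 2 + feynman x)). clear x. intros x.
  auto_derive; [repeat split; [apply ex_derive_gauss_int | eexists; apply is_derive_feynman] |].
  rewrite Derive_gauss_int, Derive_feynman. ring.
Qed.

Lemma sqrt_PI_pos : 0 < sqrt PI.
Proof. apply sqrt_lt_R0, PI_RGT_0. Qed.

Lemma sqrt_PI_sqr : sqrt PI * sqrt PI = PI.
Proof. apply sqrt_sqrt. generalize PI_RGT_0. lra. Qed.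

Lemma F_eq_gauss_int y : F y = 2 / sqrt PI * gauss_int y.
Proof.
  unfold F. change (fun x => exp (- x ^ 2)) with gauss.
  rewrite <- (@RInt_Chasles R_CompleteNormedModule gauss (- y) 0 y) by apply ex_RInt_gauss.
  rewrite <- (@opp_RInt_swap R_CompleteNormedModule gauss) by apply ex_RInt_gauss.
  fold (gauss_int (- y)) (gauss_int y). rewrite gauss_int_opp.
  unfold plus, opp; cbn. field. apply Rgt_not_eq, sqrt_PI_pos.
Qed.

Lemma F_0 : F 0 = 0.
Proof. rewrite F_eq_gauss_int, gauss_int_0. ring. Qed.

Lemma is_derive_F y : is_derive F y (2 / sqrt PI * gauss y).
Proof.
  apply (is_derive_ext (fun t => 2 / sqrt PI * gauss_int t)).
  - intros t. symmetry. apply F_eq_gauss_int.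
  - apply is_derive_scal, is_derive_gauss_int.
Qed.

Lemma one_sub_F_bounds y : 0 <= y -> 0 <= 1 - F y <= 4 / PI * gauss y.
Proof.
  intros Hy. rewrite F_eq_gauss_int.
  generalize sqrt_PI_pos sqrt_PI_sqr (gauss_int_sqr_add_feynman y) (feynman_bounds y)
    (gauss_int_ge0 y Hy).
  set (c := sqrt PI). set (p := gauss_int y). intros Hc Hcc Hsq HA Hp.
  rewrite <- Hcc in Hsq |- *.
  assert (Hdiff : (c / 2 - p) * (c / 2 + p) = feynman y) by nra.
  assert (Hlo : 0 <= c / 2 - p) by nra.
  assert (Hhi : (c / 2 - p) * (c / 2) <= gauss y) by nra.
  replace (1 - 2 / c * p) with (2 / c * (c / 2 - p)) by (field; lra).
  split.
  - apply Rmult_le_pos; [apply Rlt_le, Rdiv_lt_0_compat |]; lra.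
  - replace (4 / (c * c) * gauss y) with (2 / c * (2 / c * gauss y)) by (field; lra).
    apply Rmult_le_compat_l; [apply Rlt_le, Rdiv_lt_0_compat; lra |].
    apply (Rmult_le_reg_r (c / 2)); [lra|].
    replace (2 / c * gauss y * (c / 2)) with (gauss y) by (field; lra). exact Hhi.
Qed.

Lemma gauss_int_ge_one_sub_exp y : 0 <= y <= 1 -> 1 - exp (- y) <= gauss_int y.
Proof.
  intros Hy.
  assert (Hint : 1 - exp (- y) = RInt (fun x => exp (- x)) 0 y :> R).
  { rewrite (RInt_of_is_derive (fun x => - exp (- x))).
    - rewrite Ropp_0, exp_0. ring.
    - intros x. auto_derive; auto. ring.
    - intros x. apply continuous_of_ex_derive. auto_derive. auto. }
  rewrite Hint. apply RInt_le; [lra | apply ex_RInt_of_continuous | apply ex_RInt_gauss |].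
  - intros x. apply continuous_of_ex_derive. auto_derive. auto.
  - intros x Hx. apply exp_le_compat. nra.
Qed.

Lemma one_sub_F_le_exp_unit_interval y : 0 <= y <= 1 -> 1 - F y <= exp (- y).
Proof.
  intros Hy. rewrite F_eq_gauss_int.
  generalize sqrt_PI_pos sqrt_PI_sqr PI_4 (gauss_int_ge_one_sub_exp y Hy)
    (gauss_int_ge0 y (proj1 Hy)).
  set (c := sqrt PI). set (p := gauss_int y). intros Hc Hcc Hpi Hlow Hp.
  assert (H2c : 1 <= 2 / c).
  { apply (Rmult_le_reg_r c); [lra|]. replace (2 / c * c) with 2 by (field; lra). nra. }
  assert (p <= 2 / c * p) by nra.
  lra.
Qed.

(* Any rate below -(1 - F)'(0) = 2/sqrt pi would do; 1/2 makes the tail y >= 1 follow from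
   [one_sub_F_bounds] with elementary constants. *)
Lemma one_sub_F_le_exp y : 0 <= y -> 1 - F y <= exp (- y / 2).
Proof.
  intros Hy. destruct (Rle_lt_dec y 1) as [Hy1 | Hy1].
  - apply Rle_trans with (exp (- y)); [apply one_sub_F_le_exp_unit_interval; lra|].
    apply exp_le_compat. lra.
  - apply Rle_trans with (4 / PI * gauss y); [apply one_sub_F_bounds; lra|].
    replace (exp (- y / 2)) with (exp (y ^ 2 - y / 2) * gauss y)
      by (unfold gauss; rewrite <- exp_plus; f_equal; field).
    apply Rmult_le_compat_r; [apply Rlt_le, exp_pos|].
    generalize (exp_ineq1_le (y ^ 2 - y / 2)) PI_RGT_0 PI2_3_2. intros Hexp Hpi Hpi3.
    apply Rle_trans with (3 / 2); [|nra].
    apply (Rmult_le_reg_r PI); [lra|]. unfold Rdiv. rewrite Rmult_assoc, Rinv_l; lra.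
Qed.

Lemma continuous_one_sub_F_pow n y : continuous (fun y => (1 - F y) ^ n) y.
Proof.
  apply continuous_of_ex_derive, ex_derive_pow.
  apply (@ex_derive_minus R_AbsRing R_NormedModule); [apply ex_derive_const|].
  eexists. apply is_derive_F.
Qed.

Lemma is_lim_one_sub_F : is_lim (fun y => 1 - F y) p_infty 0.
Proof.
  apply (is_lim_le_le_loc (fun _ => 0) (fun y => exp (- y / 2))).
  - exists 0. intros y Hy. split; [apply one_sub_F_bounds | apply one_sub_F_le_exp]; lra.
  - apply is_lim_const.
  - apply (is_lim_comp exp (fun y => - y / 2) p_infty 0 m_infty).
    + apply is_lim_exp_m.
    + intros P [M HP]. exists (- 2 * M). intros y Hy. apply HP. lra.
    + exists 0. intros y _. discriminate.
Qed.

Lemma is_RInt_gen_one_sub_F_pow_mul_gauss n :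
  is_RInt_gen (fun y => (1 - F y) ^ n * gauss y) (at_point 0) (Rbar_locally p_infty)
    (sqrt PI / (2 * (INR n + 1))).
Proof.
  assert (Hn : 0 < INR n + 1) by (generalize (pos_INR n); lra).
  set (k := - sqrt PI / (2 * (INR n + 1))).
  set (H := fun y => k * (1 - F y) ^ S n).
  assert (HH : forall y, is_derive H y ((1 - F y) ^ n * gauss y)).
  { intros y. evar (d : R); replace ((1 - F y) ^ n * gauss y) with d.
    - apply is_derive_scal, is_derive_pow.
      apply (@is_derive_minus R_AbsRing R_NormedModule);
        [apply is_derive_const | apply is_derive_F].
    - unfold d, k. rewrite S_INR. unfold minus, plus, opp, zero; cbn -[INR].
      field. split; [apply Rgt_not_eq, sqrt_PI_pos | lra]. }
  apply (is_RInt_gen_ext (Derive H)).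
  { apply filter_forall. intros ab x _. apply is_derive_unique, HH. }
  replace (sqrt PI / (2 * (INR n + 1))) with (0 - k) by (unfold k; field; lra).
  apply is_RInt_gen_Derive.
  - apply filter_forall. intros ab x _. eexists. apply HH.
  - apply filter_forall. intros ab x _.
    apply (continuous_ext (fun y => (1 - F y) ^ n * gauss y)).
    + intros y. symmetry. apply is_derive_unique, HH.
    + apply (@continuous_mult _ R_AbsRing);
        [apply continuous_one_sub_F_pow | apply continuous_gauss].
  - intros P HP. apply locally_singleton in HP.
    unfold filtermap, at_point, H. rewrite F_0, Rminus_0_r, pow1, Rmult_1_r. exact HP.
  - apply (filterlim_comp _ _ _ (fun y => 1 - F y) (fun u => k * u ^ S n) _ (locally 0)).
    + exact is_lim_one_sub_F.
    + assert (Hc : continuous (fun u => k * u ^ S n) 0)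
        by (apply continuous_of_ex_derive; auto_derive; auto).
      unfold continuous in Hc. rewrite pow_i, Rmult_0_r in Hc by lia. exact Hc.
Qed.

Lemma continuous_one_sub_F_pow_mul_one_sub_gauss n y :
  continuous (fun y => (1 - F y) ^ n * (1 - gauss y)) y.
Proof.
  apply (@continuous_mult _ R_AbsRing); [apply continuous_one_sub_F_pow |].
  apply continuous_of_ex_derive. unfold gauss. auto_derive. auto.
Qed.

Lemma is_RInt_gen_one_sub_F_pow_mul_one_sub_gauss n : (1 <= n)%nat ->
  exists L, 0 <= L <= 16 / INR n ^ 3 /\
    is_RInt_gen (fun y => (1 - F y) ^ n * (1 - gauss y)) (at_point 0) (Rbar_locally p_infty) L.
Proof.
  intros Hn. assert (Hm : 0 < INR n) by (apply lt_0_INR; lia).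
  apply is_RInt_gen_of_nonneg_bounded.
  - apply continuous_one_sub_F_pow_mul_one_sub_gauss.
  - intros y Hy. apply Rmult_le_pos.
    + apply pow_le, one_sub_F_bounds, Hy.
    + generalize (gauss_le1 y). lra.
  - intros b Hb.
    replace (16 / INR n ^ 3) with (2 / (INR n / 2) ^ 3) by (field; lra).
    apply Rle_trans with (RInt (fun y => exp (- (INR n / 2 * y)) * y ^ 2) 0 b);
      [| apply RInt_exp_mul_sqr_le; lra].
    apply RInt_le; [exact Hb | apply ex_RInt_of_continuous | apply ex_RInt_of_continuous |].
    + apply continuous_one_sub_F_pow_mul_one_sub_gauss.
    + intros y. apply continuous_of_ex_derive. auto_derive. auto.
    + intros y Hy.
      replace (- (INR n / 2 * y)) with (INR n * (- y / 2)) by field.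
      rewrite <- exp_pow. apply Rmult_le_compat.
      * apply pow_le, one_sub_F_bounds; lra.
      * generalize (gauss_le1 y). lra.
      * apply pow_incr. split; [apply one_sub_F_bounds | apply one_sub_F_le_exp]; lra.
      * apply one_sub_gauss_le_sqr.
Qed.

Lemma is_RInt_gen_one_sub_F_pow n : (1 <= n)%nat ->
  exists L, 0 <= L <= 16 / INR n ^ 3 /\
    is_RInt_gen (fun y => (1 - F y) ^ n) (at_point 0) (Rbar_locally p_infty)
      (sqrt PI / (2 * (INR n + 1)) + L).
Proof.
  intros Hn.
  destruct (is_RInt_gen_one_sub_F_pow_mul_one_sub_gauss n Hn) as [L [HL Hrem]].
  exists L. split; [exact HL |].
  apply (is_RInt_gen_ext (fun y => (1 - F y) ^ n * gauss y + (1 - F y) ^ n * (1 - gauss y))).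
  - apply filter_forall. intros ab y _.
    rewrite <- Rmult_plus_distr_l, Rplus_minus, Rmult_1_r. reflexivity.
  - apply (is_RInt_gen_plus (V := R_NormedModule) (fun y => (1 - F y) ^ n * gauss y)
             (fun y => (1 - F y) ^ n * (1 - gauss y)));
      [apply is_RInt_gen_one_sub_F_pow_mul_gauss | exact Hrem].
Qed.

Theorem theorem2 :
  exists I : nat -> R,
    (forall n : nat, (1 <= n)%nat ->
       is_RInt_gen (fun y => (1 - F y) ^ n)
         (at_point 0) (Rbar_locally p_infty) (I n)) /\
    is_lim_seq (fun n : nat => (I n - sqrt PI / (2 * (INR n + 1))) * INR n ^ 2) 0.
Proof.
  exists (fun n => RInt_gen (fun y => (1 - F y) ^ n) (at_point 0) (Rbar_locally p_infty)).
  split.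
  - intros n Hn. destruct (is_RInt_gen_one_sub_F_pow n Hn) as [L [_ HI]].
    rewrite (is_RInt_gen_unique _ _ HI). exact HI.
  - apply (is_lim_seq_le_le_loc (fun _ => 0) _ (fun n => 16 * / INR n)).
    + exists 1%nat. intros n Hn.
      destruct (is_RInt_gen_one_sub_F_pow n Hn) as [L [HL HI]].
      rewrite (is_RInt_gen_unique _ _ HI).
      assert (Hm : 0 < INR n) by (apply lt_0_INR; lia).
      replace (sqrt PI / (2 * (INR n + 1)) + L - sqrt PI / (2 * (INR n + 1))) with L by ring.
      replace (16 * / INR n) with (16 / INR n ^ 3 * INR n ^ 2) by (field; lra).
      split; [apply Rmult_le_pos | apply Rmult_le_compat_r]; try apply pow_le; lra.
    + apply is_lim_seq_const.
    + replace (Finite 0) with (Rbar_mult 16 (Rbar_inv p_infty)) by (simpl; f_equal; ring).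
      apply is_lim_seq_scal_l, is_lim_seq_inv; [apply is_lim_seq_INR | discriminate].
Qed.
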